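(* Let $p:=\frac1{2\sqrt2}$ and $c:=\frac34$, and for $\alpha\in\mathbb R$, $q,C>0$, $n>0$ let $$X_{qC\alpha}(n):=\int_q^{+\infty}d\rho\,\rho^\alpha(1+\rho^2)^ne^{-n\frac{(\rho-q)^2}{C}}.$$ Then for fixed $\alpha\in\mathbb R$ and $n\to+\infty$, $$X_{pc\alpha}(n)=\frac{3\sqrt{\pi/5}}{2^{\alpha/2+1/2}}\,\frac{(3/2)^n}{e^{n/6}\sqrt n}\Big[1+O(\tfrac1n)\Big],\qquad X_{2p,2c,\alpha}(n)=3\sqrt{\pi/7}\,2^{\alpha/2}\,\frac{3^n}{e^{n/3}\sqrt n}\Big[1+O(\tfrac1n)\Big].$$ *)

From Stdlib Require Import Reals.
From Coquelicot Require Import Coquelicot.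
Open Scope R_scope.

Definition Xintegrand (q C alpha n : R) (rho : R) : R :=
  Rpower rho alpha * Rpower (1 + rho ^ 2) n * exp (- n * (rho - q) ^ 2 / C).

Definition X (q C alpha n : R) : R :=
  RInt_gen (Xintegrand q C alpha n) (at_point q) (Rbar_locally p_infty).

Definition X_conv (q C alpha n : R) : Prop :=
  ex_RInt_gen (Xintegrand q C alpha n) (at_point q) (Rbar_locally p_infty).

Definition X_asymp (q C alpha : R) (M : R -> R) : Prop :=
  exists K N : R, 0 < N /\
    forall n : R, N <= n ->
      X_conv q C alpha n /\
      exists r : R, Rabs r <= K / n /\ X q C alpha n = M n * (1 + r).

Definition p : R := 1 / (2 * sqrt 2).
Definition c : R := 3 / 4.

From Stdlib Require Import Reals Lra Psatz Classical.
From Coquelicot Require Import Coquelicot.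
Open Scope R_scope.

(* Laplace's method. For [x > 0] the integrand is [x^alpha exp (n phase(x))] with
   [phase(x) = ln (1 + x^2) - (x - q)^2 / C]. Both pairs [(q, C)] have a nondegenerate critical
   point [r > q] of [phase] ([r = 1/sqrt 2], resp. [r = sqrt 2]), and [ln y <= y - 1] gives the
   global bound [phase x - phase r <= - k (x - r)^2] with [k = 1/C - 1/(1 + r^2) > 0], so away
   from [r] the integral is exponentially small. Near [r], writing
   [phase (r + t) - phase r = - a t^2 / 2 + O(t^3)], pairing [r + t] with [r - t] cancels the odd
   cubic term, so the integral over [[r - d, r + d]] is [r^alpha sqrt (2 pi / (n a))] up to
   [O(n^(-3/2))]. The Gaussian integral [int_0^oo exp (-t^2) = sqrt pi / 2] is obtained by the
   classical argument differentiating [(int_0^x exp (-t^2))^2 + int_0^1 exp (-x^2 (1 + t^2)) / (1 + t^2)]. *)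

Lemma exp_le_compat x y : x <= y -> exp x <= exp y.
Proof.
intros H. destruct (Rle_lt_or_eq_dec _ _ H) as [Hlt | ->]; [left; now apply exp_increasing | lra].
Qed.

Lemma ln_le_sub_1 y : 0 < y -> ln y <= y - 1.
Proof. intros Hy. assert (H := exp_ineq1_le (ln y)). rewrite exp_ln in H by auto. lra. Qed.

Lemma mean_value_abs_le (f df : R -> R) (x M : R) :
  (forall y, Rabs y <= Rabs x -> is_derive f y (df y)) ->
  (forall y, Rabs y <= Rabs x -> Rabs (df y) <= M) ->
  Rabs (f x - f 0) <= M * Rabs x.
Proof.
intros Hd Hb.
assert (Hin : forall y, Rmin 0 x <= y <= Rmax 0 x -> Rabs y <= Rabs x).
{ intros y [H1 H2]. unfold Rmin, Rmax in *. destruct (Rle_dec 0 x);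
  unfold Rabs; repeat destruct Rcase_abs; lra. }
destruct (MVT_gen f 0 x df) as [y [Hy ->]].
- intros y Hy. apply Hd, Hin. lra.
- intros y Hy. apply continuity_pt_filterlim, (ex_derive_continuous (K := R_AbsRing) (V := R_NormedModule)).
  eexists; apply Hd, Hin; auto.
- rewrite Rabs_mult, Rminus_0_r.
  apply Rmult_le_compat_r; [apply Rabs_pos | apply Hb, Hin; auto].
Qed.

Lemma ln1p_abs_le u : Rabs u <= 1/2 -> Rabs (ln (1 + u)) <= 2 * Rabs u.
Proof.
intros Hu.
assert (H := mean_value_abs_le (fun x => ln (1 + x)) (fun x => / (1 + x)) u 2).
cbv beta in H. rewrite Rplus_0_r, ln_1, Rminus_0_r in H. apply H.
- intros y Hy. assert (Ry : Rabs y <= 1/2) by lra. apply Rabs_le_between in Ry.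
  auto_derive; [lra | field; lra].
- intros y Hy. assert (Ry : Rabs y <= 1/2) by lra. apply Rabs_le_between in Ry.
  rewrite Rabs_right by (left; apply Rinv_0_lt_compat; lra).
  apply (Rmult_le_reg_r (1 + y)); [lra | rewrite Rinv_l; lra].
Qed.

Definition ln1p_rem3 (s : R) : R := ln (1 + s) - s + s ^ 2 / 2 - s ^ 3 / 3.

Lemma ln1p_rem3_abs_le s X : Rabs s <= X -> X <= 1/2 -> Rabs (ln1p_rem3 s) <= 2 * X ^ 4.
Proof.
intros Hs HX.
assert (H := mean_value_abs_le ln1p_rem3 (fun x => - x ^ 3 / (1 + x)) s (2 * X ^ 3)).
assert (E0 : ln1p_rem3 0 = 0) by (unfold ln1p_rem3; replace (1 + 0) with 1 by ring; rewrite ln_1; field).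
rewrite E0, Rminus_0_r in H.
assert (HX0 : 0 <= X) by (eapply Rle_trans; [apply Rabs_pos | eauto]).
apply Rle_trans with (2 * X ^ 3 * Rabs s).
2:{ replace (2 * X ^ 4) with (2 * X ^ 3 * X) by ring.
    apply Rmult_le_compat_l; [apply Rmult_le_pos; [lra | now apply pow_le] | auto]. }
apply H.
- intros y Hy. assert (Ry : Rabs y <= 1/2) by lra. apply Rabs_le_between in Ry.
  unfold ln1p_rem3. auto_derive; [lra | field; lra].
- intros y Hy. assert (Ry : Rabs y <= 1/2) by lra. apply Rabs_le_between in Ry.
  unfold Rdiv. rewrite Rabs_mult, Rabs_Ropp, Rabs_inv, <- RPow_abs, (Rabs_right (1 + y)) by lra.
  assert (0 <= Rabs y ^ 3 <= X ^ 3) by (split; [apply pow_le, Rabs_pos | apply pow_incr; split; [apply Rabs_pos | lra]]).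
  assert (/ (1 + y) <= 2) by (apply (Rmult_le_reg_r (1 + y)); [lra | rewrite Rinv_l; lra]).
  assert (0 < / (1 + y)) by (apply Rinv_0_lt_compat; lra).
  nra.
Qed.

Lemma exp_sub_1_abs_le y : Rabs (exp y - 1) <= Rabs y * exp (Rabs y).
Proof.
assert (H := mean_value_abs_le exp exp y (exp (Rabs y))).
rewrite exp_0, Rmult_comm in H. apply H.
- intros z _. apply is_derive_Reals, derivable_pt_lim_exp.
- intros z Hz. rewrite Rabs_right by (left; apply exp_pos).
  apply exp_le_compat, Rabs_le_between. lra.
Qed.

Lemma exp_taylor1_abs_le y : Rabs (exp y - 1 - y) <= y ^ 2 * exp (Rabs y).
Proof.
assert (H := mean_value_abs_le (fun x => exp x - 1 - x) (fun x => exp x - 1) y (Rabs y * exp (Rabs y))).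
cbv beta in H. rewrite exp_0, !Rminus_0_r, Rminus_eq_0, Rminus_0_r in H.
replace (y ^ 2 * exp (Rabs y)) with (Rabs y * exp (Rabs y) * Rabs y)
  by (rewrite <- (pow2_abs y); ring).
apply H.
- intros z _. auto_derive; [auto | ring].
- intros z Hz. apply Rle_trans with (Rabs z * exp (Rabs z)); [apply exp_sub_1_abs_le |].
  apply Rmult_le_compat; auto using Rabs_pos, exp_le_compat; left; apply exp_pos.
Qed.

Lemma exp_add_exp_sub_2_abs_le x y L : Rabs x <= L -> Rabs y <= L ->
  Rabs (exp x + exp y - 2) <= 2 * L ^ 2 * exp L + Rabs (x + y).
Proof.
intros Hx Hy.
assert (Tx : Rabs (exp x - 1 - x) <= L ^ 2 * exp L).
{ eapply Rle_trans; [apply exp_taylor1_abs_le |].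
  rewrite <- (pow2_abs x). apply Rmult_le_compat; [apply pow2_ge_0 | left; apply exp_pos | | now apply exp_le_compat].
  apply pow_incr. split; [apply Rabs_pos | auto]. }
assert (Ty : Rabs (exp y - 1 - y) <= L ^ 2 * exp L).
{ eapply Rle_trans; [apply exp_taylor1_abs_le |].
  rewrite <- (pow2_abs y). apply Rmult_le_compat; [apply pow2_ge_0 | left; apply exp_pos | | now apply exp_le_compat].
  apply pow_incr. split; [apply Rabs_pos | auto]. }
replace (exp x + exp y - 2) with ((exp x - 1 - x) + (exp y - 1 - y) + (x + y)) by ring.
eapply Rle_trans; [apply Rabs_triang |].
eapply Rle_trans; [apply Rplus_le_compat_r, Rabs_triang | lra].
Qed.

Lemma poly_le_exp y : 0 <= y -> y <= exp y /\ y ^ 2 <= 4 * exp y /\ y ^ 3 <= 27 * exp y.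
Proof.
intros Hy. split; [|split].
- assert (H := exp_ineq1_le y). lra.
- assert (H := exp_ineq1_le (y / 2)).
  replace (exp y) with (exp (y / 2) ^ 2) by (simpl; rewrite Rmult_1_r, <- exp_plus; f_equal; field).
  assert ((1 + y / 2) ^ 2 <= exp (y / 2) ^ 2) by (apply pow_incr; lra). nra.
- assert (H := exp_ineq1_le (y / 3)).
  replace (exp y) with (exp (y / 3) ^ 3) by (simpl; rewrite Rmult_1_r, <- !exp_plus; f_equal; field).
  assert ((1 + y / 3) ^ 3 <= exp (y / 3) ^ 3) by (apply pow_incr; lra).
  assert (0 <= y ^ 2) by nra. nra.
Qed.

Lemma ex_RInt_cont (f : R -> R) a b : a <= b ->
  (forall x, a <= x <= b -> continuous f x) -> ex_RInt f a b.
Proof.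
intros Hab Hf. apply (ex_RInt_continuous (V := R_CompleteNormedModule)).
intros x Hx. rewrite Rmin_left, Rmax_right in Hx by lra. now apply Hf.
Qed.

Lemma RInt_scalR (f : R -> R) k a b : ex_RInt f a b ->
  RInt (fun x => k * f x) a b = k * RInt f a b.
Proof. exact (RInt_scal f a b k). Qed.

Lemma RInt_ChaslesR (f : R -> R) a b c : ex_RInt f a b -> ex_RInt f b c ->
  RInt f a b + RInt f b c = RInt f a c.
Proof. exact (RInt_Chasles f a b c). Qed.

Lemma RInt_nonneg_le_Chasles (f : R -> R) a b c : a <= b <= c ->
  ex_RInt f a b -> ex_RInt f b c -> (forall x, b <= x <= c -> 0 <= f x) ->
  RInt f a b <= RInt f a c.
Proof.
intros Habc Hab Hbc Hf. rewrite <- (RInt_ChaslesR f a b c) by auto.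
assert (0 <= RInt f b c) by (apply RInt_ge_0; [lra | auto | intros; apply Hf; lra]).
lra.
Qed.

Lemma RInt_abs_sub_le (f g h : R -> R) a b : a <= b ->
  ex_RInt f a b -> ex_RInt g a b -> ex_RInt h a b ->
  (forall t, a <= t <= b -> Rabs (f t - g t) <= h t) ->
  Rabs (RInt f a b - RInt g a b) <= RInt h a b.
Proof.
intros Hab Hf Hg Hh Hfgh.
assert (Hd : ex_RInt (fun t => f t - g t) a b) by exact (ex_RInt_minus f g a b Hf Hg).
replace (RInt f a b - RInt g a b) with (RInt (fun t => f t - g t) a b) by exact (RInt_minus f g a b Hf Hg).
apply Rabs_le_between. split.
- rewrite <- (RInt_opp h a b Hh : RInt (fun t => - h t) a b = - RInt h a b).
  apply RInt_le; auto. exact (ex_RInt_opp h a b Hh).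
  intros t Ht. assert (H := Hfgh t ltac:(lra)). apply Rabs_le_between in H. lra.
- apply RInt_le; auto. intros t Ht. assert (H := Hfgh t ltac:(lra)). apply Rabs_le_between in H. lra.
Qed.

Lemma is_RInt_symmetric_split (f : R -> R) c d : 0 <= d ->
  (forall x, c - d <= x <= c + d -> continuous f x) ->
  is_RInt (fun t => f (c + t) + f (c - t)) 0 d (RInt f (c - d) (c + d)).
Proof.
intros Hd Hf.
assert (Hl : ex_RInt f (c - d) c) by (apply ex_RInt_cont; [lra | intros; apply Hf; lra]).
assert (Hr : ex_RInt f c (c + d)) by (apply ex_RInt_cont; [lra | intros; apply Hf; lra]).
assert (Er : is_RInt (fun t => f (c + t)) 0 d (RInt f c (c + d))).
{ apply (is_RInt_ext (fun t => scal 1 (f (1 * t + c)))).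
  { intros t _. change (scal 1 (f (1 * t + c))) with (1 * f (1 * t + c)).
    rewrite Rmult_1_l. f_equal. ring. }
  apply (is_RInt_comp_lin f 1 c 0 d).
  replace (1 * 0 + c) with c by ring. replace (1 * d + c) with (c + d) by ring.
  exact (RInt_correct f _ _ Hr). }
assert (El : is_RInt (fun t => f (c - t)) 0 d (RInt f (c - d) c)).
{ apply (is_RInt_ext (fun t => opp (scal (-1) (f (-1 * t + c))))).
  { intros t _. change (- (-1 * f (-1 * t + c)) = f (c - t)).
    replace (-1 * t + c) with (c - t) by ring. ring. }
  rewrite <- (opp_opp (RInt f (c - d) c)).
  apply (is_RInt_opp (fun y => scal (-1) (f (-1 * y + c)))), (is_RInt_comp_lin f (-1) c 0 d).
  replace (-1 * 0 + c) with c by ring. replace (-1 * d + c) with (c - d) by ring.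
  apply (is_RInt_swap f). exact (RInt_correct f _ _ Hl). }
rewrite <- (RInt_ChaslesR f (c - d) c (c + d)) by auto.
rewrite Rplus_comm. exact (is_RInt_plus _ _ _ _ _ _ Er El).
Qed.

Lemma is_RInt_gen_p_infty_nonneg (f : R -> R) a l :
  (forall x, a <= x -> continuous f x) -> (forall x, a <= x -> 0 <= f x) ->
  is_lub (fun v => exists b, a <= b /\ v = RInt f a b) l ->
  is_RInt_gen f (at_point a) (Rbar_locally p_infty) l.
Proof.
intros Hc Hp [Hub Hlub] P [eps HP].
assert (Hex : forall b, a <= b -> ex_RInt f a b) by (intros; apply ex_RInt_cont; auto; intros; apply Hc; lra).
assert (Hmono : forall x y, a <= x <= y -> RInt f a x <= RInt f a y).
{ intros x y Hxy. apply RInt_nonneg_le_Chasles; auto; [apply Hex; lra | |].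
  - apply ex_RInt_cont; [lra | intros; apply Hc; lra].
  - intros; apply Hp; lra. }
assert (Hb1 : exists b1, a <= b1 /\ l - eps < RInt f a b1).
{ apply NNPP. intros H. assert (l <= l - eps); [| destruct eps; simpl in *; lra].
  apply Hlub. intros v [b [Hb ->]]. apply Rnot_lt_le. intros Hlt. apply H. now exists b. }
destruct Hb1 as [b1 [Hb1 Hlt]].
apply (Filter_prod _ _ _ (fun x => x = a) (fun y => b1 < y)); [reflexivity | now exists b1 |].
intros x y -> Hy. exists (RInt f a y). split.
- apply (RInt_correct (V := R_CompleteNormedModule)), Hex. lra.
- apply HP. change (Rabs (RInt f a y - l) < eps).
  assert (RInt f a b1 <= RInt f a y) by (apply Hmono; lra).
  assert (RInt f a y <= l) by (apply Hub; exists y; split; [lra | auto]).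
  apply Rabs_def1; lra.
Qed.

Lemma RInt_gen_p_infty_close (f : R -> R) a L E b0 :
  (forall x, a <= x -> continuous f x) -> (forall x, a <= x -> 0 <= f x) -> a <= b0 ->
  (forall b, b0 <= b -> Rabs (RInt f a b - L) <= E) ->
  ex_RInt_gen f (at_point a) (Rbar_locally p_infty) /\
  Rabs (RInt_gen f (at_point a) (Rbar_locally p_infty) - L) <= E.
Proof.
intros Hc Hp Hab0 Hb.
set (S := fun v => exists b, a <= b /\ v = RInt f a b).
assert (Hmono : forall x y, a <= x <= y -> RInt f a x <= RInt f a y).
{ intros x y Hxy. apply RInt_nonneg_le_Chasles; auto.
  - apply ex_RInt_cont; [lra | intros; apply Hc; lra].
  - apply ex_RInt_cont; [lra | intros; apply Hc; lra].
  - intros; apply Hp; lra. }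
assert (Hbound : forall v, S v -> v <= L + E).
{ intros v [b [Hb1 ->]]. apply Rle_trans with (RInt f a (Rmax b b0)).
  - apply Hmono. split; [auto | apply Rmax_l].
  - assert (H := Hb (Rmax b b0) (Rmax_r _ _)). apply Rabs_le_between' in H. lra. }
destruct (completeness S) as [l Hl]; [now exists (L + E) | now exists (RInt f a a), a; split; [lra |] |].
assert (Hlim := is_RInt_gen_p_infty_nonneg f a l Hc Hp Hl).
split; [now exists l |].
rewrite (is_RInt_gen_unique _ _ Hlim). apply Rabs_le_between'. split.
- assert (H := Hb b0 (Rle_refl _)). apply Rabs_le_between' in H.
  assert (RInt f a b0 <= l) by (apply (proj1 Hl); now exists b0). lra.
- apply (proj2 Hl). exact Hbound.
Qed.

Definition gauss (k x : R) : R := exp (- (k * (x * x))).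

Definition gauss_RInt (x : R) : R := RInt (fun t => exp (- (t * t))) 0 x.

Definition gauss_aux_fun (x t : R) : R := exp (- (x * x) * (1 + t * t)) / (1 + t * t).

Definition gauss_aux (x : R) : R := RInt (gauss_aux_fun x) 0 1.

Lemma gauss_opp k x : gauss k (- x) = gauss k x.
Proof. unfold gauss. f_equal. ring. Qed.

Lemma gauss_le_1 k x : 0 <= k -> gauss k x <= 1.
Proof.
intros Hk. unfold gauss. rewrite <- exp_0. apply exp_le_compat.
assert (0 <= k * (x * x)) by (apply Rmult_le_pos; [auto | apply Rle_0_sqr]). lra.
Qed.

Lemma gauss_continuous k c x : continuous (fun t => gauss k (t - c)) x.
Proof. apply (ex_derive_continuous (fun t => exp (- (k * ((t - c) * (t - c)))))). auto_derive. auto. Qed.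

Lemma ex_RInt_gauss k c a b : ex_RInt (fun t => gauss k (t - c)) a b.
Proof. apply (ex_RInt_continuous (V := R_CompleteNormedModule)). intros; apply gauss_continuous. Qed.

Lemma ex_RInt_gauss_0 k a b : ex_RInt (gauss k) a b.
Proof.
apply (ex_RInt_ext (fun t => gauss k (t - 0))); [intros; now rewrite Rminus_0_r | apply ex_RInt_gauss].
Qed.

Lemma ex_RInt_exp_neg_sqr a b : ex_RInt (fun t => exp (- (t * t))) a b.
Proof.
apply (ex_RInt_continuous (V := R_CompleteNormedModule)). intros x _.
apply (ex_derive_continuous (fun t => exp (- (t * t)))). auto_derive. auto.
Qed.

Lemma gauss_aux_fun_continuous x t : continuous (gauss_aux_fun x) t.
Proof.
unfold gauss_aux_fun. assert (0 < 1 + t * t) by nra.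
apply (ex_derive_continuous (fun t => exp (- (x * x) * (1 + t * t)) / (1 + t * t))).
auto_derive. lra.
Qed.

Lemma gauss_RInt_derive x : is_derive gauss_RInt x (exp (- (x * x))).
Proof.
apply (is_derive_RInt (fun t => exp (- (t * t))) gauss_RInt 0 x).
- apply filter_forall. intros b. apply (RInt_correct (V := R_CompleteNormedModule)), ex_RInt_exp_neg_sqr.
- apply (ex_derive_continuous (fun t => exp (- (t * t)))). auto_derive. auto.
Qed.

Lemma gauss_aux_fun_derive x t :
  is_derive (fun y => gauss_aux_fun y t) x (-2 * x * exp (- (x * x) * (1 + t * t))).
Proof. unfold gauss_aux_fun. assert (0 < 1 + t * t) by nra. auto_derive; [lra | field; lra]. Qed.

(* The substitution [u = x t] turns the [t]-integral of the derivative into [gauss_RInt x]. *)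
Lemma RInt_gauss_aux_fun_derive x :
  RInt (fun t => Derive (fun y => gauss_aux_fun y t) x) 0 1 = -2 * exp (- (x * x)) * gauss_RInt x.
Proof.
rewrite (RInt_ext _ (fun t => scal (-2 * exp (- (x * x))) (scal x (exp (- ((x * t + 0) * (x * t + 0))))))).
2:{ intros t _. transitivity (-2 * x * exp (- (x * x) * (1 + t * t))).
    { apply is_derive_unique, gauss_aux_fun_derive. }
    change (-2 * x * exp (- (x * x) * (1 + t * t))
            = -2 * exp (- (x * x)) * (x * exp (- ((x * t + 0) * (x * t + 0))))).
    replace (- (x * x) * (1 + t * t)) with (- (x * x) + - ((x * t + 0) * (x * t + 0))) by ring.
    rewrite exp_plus. ring. }
apply is_RInt_unique.
apply (is_RInt_scal _ 0 1 (-2 * exp (- (x * x))) (gauss_RInt x)).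
apply (is_RInt_comp_lin (fun t => exp (- (t * t))) x 0 0 1).
replace (x * 0 + 0) with 0 by ring. replace (x * 1 + 0) with x by ring.
apply (RInt_correct (V := R_CompleteNormedModule)), ex_RInt_exp_neg_sqr.
Qed.

Lemma gauss_aux_derive x : is_derive gauss_aux x (-2 * exp (- (x * x)) * gauss_RInt x).
Proof.
rewrite <- RInt_gauss_aux_fun_derive. unfold gauss_aux.
apply (is_derive_RInt_param gauss_aux_fun 0 1 x).
- apply filter_forall. intros y t _. eexists. apply gauss_aux_fun_derive.
- intros t _. apply continuity_2d_pt_ext with (f := fun u v => -2 * u * exp (- (u * u) * (1 + v * v))).
  { intros u v. symmetry. apply is_derive_unique, gauss_aux_fun_derive. }
  apply continuity_2d_pt_mult.
  + apply continuity_2d_pt_mult; [apply continuity_2d_pt_const | apply continuity_2d_pt_id1].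
  + apply (continuity_1d_2d_pt_comp exp (fun u v => - (u * u) * (1 + v * v))).
    * apply derivable_continuous_pt, derivable_pt_exp.
    * apply continuity_2d_pt_mult.
      -- apply continuity_2d_pt_opp, continuity_2d_pt_mult; apply continuity_2d_pt_id1.
      -- apply continuity_2d_pt_plus; [apply continuity_2d_pt_const |].
         apply continuity_2d_pt_mult; apply continuity_2d_pt_id2.
- apply filter_forall. intros y. apply (ex_RInt_continuous (V := R_CompleteNormedModule)).
  intros; apply gauss_aux_fun_continuous.
Qed.

Lemma gauss_aux_0 : gauss_aux 0 = PI / 4.
Proof.
unfold gauss_aux. rewrite <- atan_1.
replace (atan 1) with (atan 1 - atan 0) by (rewrite atan_0; ring).
apply is_RInt_unique, (is_RInt_ext (fun t => / (1 + t ^ 2))).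
- intros t _. unfold gauss_aux_fun. replace (- (0 * 0) * (1 + t * t)) with 0 by ring.
  rewrite exp_0. field_simplify; nra.
- apply (is_RInt_derive atan (fun t => / (1 + t ^ 2))).
  + intros t _. apply is_derive_Reals, derivable_pt_lim_atan.
  + intros t _. apply (ex_derive_continuous (fun t => / (1 + t ^ 2))). auto_derive. nra.
Qed.

Lemma gauss_RInt_sqr_add_aux x : gauss_RInt x * gauss_RInt x + gauss_aux x = PI / 4.
Proof.
rewrite <- gauss_aux_0.
assert (H : forall y, is_derive (fun y => gauss_RInt y * gauss_RInt y + gauss_aux y) y 0).
{ intros y. replace 0 with (exp (- (y * y)) * gauss_RInt y + gauss_RInt y * exp (- (y * y))
                            + -2 * exp (- (y * y)) * gauss_RInt y) by ring.
  apply (is_derive_plus (fun y => gauss_RInt y * gauss_RInt y) gauss_aux); [| apply gauss_aux_derive].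
  apply (is_derive_mult gauss_RInt gauss_RInt); [apply gauss_RInt_derive | apply gauss_RInt_derive |].
  intros; simpl; unfold mult; simpl; ring. }
assert (E0 : gauss_RInt 0 = 0) by apply (RInt_point (V := R_CompleteNormedModule)).
destruct (MVT_gen (fun y => gauss_RInt y * gauss_RInt y + gauss_aux y) 0 x (fun _ => 0)) as [y [_ Hy]].
- intros; apply H.
- intros y _. apply continuity_pt_filterlim.
  apply (ex_derive_continuous (fun y => gauss_RInt y * gauss_RInt y + gauss_aux y)). eexists; apply H.
- rewrite E0 in Hy. lra.
Qed.

Lemma gauss_aux_bounds x : 0 <= gauss_aux x <= exp (- (x * x)).
Proof.
assert (Hex : ex_RInt (gauss_aux_fun x) 0 1).
{ apply (ex_RInt_continuous (V := R_CompleteNormedModule)). intros; apply gauss_aux_fun_continuous. }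
unfold gauss_aux. split.
- apply RInt_ge_0; [lra | auto |]. intros t _. unfold gauss_aux_fun.
  apply Rmult_le_pos; [left; apply exp_pos | left; apply Rinv_0_lt_compat; nra].
- apply Rle_trans with (RInt (fun _ => exp (- (x * x))) 0 1).
  + apply RInt_le; auto; [lra | apply ex_RInt_const |].
    intros t _. unfold gauss_aux_fun. assert (0 < 1 + t * t) by nra.
    apply (Rmult_le_reg_r (1 + t * t)); auto. unfold Rdiv. rewrite Rmult_assoc, Rinv_l, Rmult_1_r by lra.
    replace (- (x * x) * (1 + t * t)) with (- (x * x) + - (x * x * t * t)) by ring. rewrite exp_plus.
    assert (exp (- (x * x * t * t)) <= 1) by (rewrite <- exp_0; apply exp_le_compat; nra).
    assert (0 < exp (- (x * x))) by apply exp_pos. nra.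
  + rewrite RInt_const. change (scal (1 - 0) (exp (- (x * x))) <= exp (- (x * x))). 
    unfold scal; simpl; unfold mult; simpl; lra.
Qed.

Lemma gauss_RInt_nonneg x : 0 <= x -> 0 <= gauss_RInt x.
Proof.
intros Hx. apply RInt_ge_0; [auto | apply ex_RInt_exp_neg_sqr |]. intros; left; apply exp_pos.
Qed.

Lemma sqrt_PI_half : sqrt PI / 2 = sqrt (PI / 4).
Proof.
replace (PI / 4) with (PI / (2 * 2)) by field.
rewrite sqrt_div_alt by lra. rewrite sqrt_square; lra.
Qed.

Lemma gauss_RInt_le x : 0 <= x -> gauss_RInt x <= sqrt PI / 2.
Proof.
intros Hx. assert (H := gauss_RInt_sqr_add_aux x). assert (H2 := gauss_aux_bounds x).
rewrite sqrt_PI_half, <- (sqrt_square (gauss_RInt x)) by now apply gauss_RInt_nonneg.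
apply sqrt_le_1_alt. lra.
Qed.

Lemma gauss_RInt_tail x : 0 <= x -> sqrt PI / 2 - gauss_RInt x <= 2 * exp (- (x * x)).
Proof.
intros Hx. assert (H := gauss_RInt_sqr_add_aux x). assert (H2 := gauss_aux_bounds x).
assert (H3 := gauss_RInt_nonneg x Hx). assert (HP := PI2_3_2).
assert (Hs : 1 / 2 <= sqrt PI / 2).
{ rewrite sqrt_PI_half, <- (sqrt_square (1 / 2)) by lra. apply sqrt_le_1_alt. lra. }
assert (Hsq : sqrt PI / 2 * (sqrt PI / 2) = PI / 4) by (rewrite sqrt_PI_half; apply sqrt_sqrt; lra).
nra.
Qed.

Lemma RInt_gauss_shift k c Y : 0 < k ->
  RInt (fun x => gauss k (x - c)) c (c + Y) = gauss_RInt (sqrt k * Y) / sqrt k.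
Proof.
intros Hk. assert (Hs : 0 < sqrt k) by now apply sqrt_lt_R0.
apply is_RInt_unique.
apply (is_RInt_ext (fun x => scal (/ sqrt k) (scal (sqrt k) (exp (- ((sqrt k * x + - (sqrt k * c))
                                                             * (sqrt k * x + - (sqrt k * c)))))))).
{ intros x _. unfold gauss.
  change (/ sqrt k * (sqrt k * exp (- ((sqrt k * x + - (sqrt k * c)) * (sqrt k * x + - (sqrt k * c)))))
          = exp (- (k * ((x - c) * (x - c))))).
  replace ((sqrt k * x + - (sqrt k * c)) * (sqrt k * x + - (sqrt k * c)))
    with (sqrt k * sqrt k * ((x - c) * (x - c))) by ring.
  rewrite sqrt_sqrt by lra. field. lra. }
replace (gauss_RInt (sqrt k * Y) / sqrt k) with (scal (/ sqrt k) (gauss_RInt (sqrt k * Y)))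
  by (change (/ sqrt k * gauss_RInt (sqrt k * Y) = gauss_RInt (sqrt k * Y) / sqrt k); field; lra).
apply (is_RInt_scal (V := R_NormedModule)), (is_RInt_comp_lin (fun t => exp (- (t * t))) (sqrt k) (- (sqrt k * c)) c (c + Y)).
replace (sqrt k * c + - (sqrt k * c)) with 0 by ring.
replace (sqrt k * (c + Y) + - (sqrt k * c)) with (sqrt k * Y) by ring.
apply (RInt_correct (V := R_CompleteNormedModule)), ex_RInt_exp_neg_sqr.
Qed.

Lemma RInt_gauss_le k c Y : 0 < k -> c <= Y ->
  RInt (fun x => gauss k (x - c)) c Y <= sqrt PI / 2 / sqrt k.
Proof.
intros Hk HY. replace Y with (c + (Y - c)) by ring. rewrite RInt_gauss_shift by auto.
assert (0 < sqrt k) by now apply sqrt_lt_R0.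
unfold Rdiv. apply Rmult_le_compat_r; [left; now apply Rinv_0_lt_compat |].
apply gauss_RInt_le, Rmult_le_pos; lra.
Qed.

Lemma RInt_gauss_le_0 k Y : 0 < k -> 0 <= Y -> RInt (gauss k) 0 Y <= sqrt PI / 2 / sqrt k.
Proof.
intros Hk HY. rewrite (RInt_ext _ (fun x => gauss k (x - 0))) by (intros; now rewrite Rminus_0_r).
now apply RInt_gauss_le.
Qed.

Lemma RInt_gauss_near k Y : 0 < k -> 0 < Y ->
  Rabs (RInt (gauss k) 0 Y - sqrt PI / 2 / sqrt k) <= 2 / (sqrt k * (k * (Y * Y))).
Proof.
intros Hk HY. assert (Hs : 0 < sqrt k) by now apply sqrt_lt_R0.
rewrite (RInt_ext _ (fun x => gauss k (x - 0))) by (intros; now rewrite Rminus_0_r).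
rewrite <- (Rplus_0_l Y) at 1. rewrite RInt_gauss_shift by auto.
assert (HkY : 0 <= sqrt k * Y) by (apply Rmult_le_pos; lra).
assert (H1 := gauss_RInt_le _ HkY). assert (H2 := gauss_RInt_tail _ HkY).
replace (sqrt k * Y * (sqrt k * Y)) with (k * (Y * Y)) in H2
  by (replace (sqrt k * Y * (sqrt k * Y)) with (sqrt k * sqrt k * (Y * Y)) by ring; rewrite sqrt_sqrt; lra).
assert (Hz : 0 < k * (Y * Y)) by (apply Rmult_lt_0_compat; nra).
assert (He : exp (- (k * (Y * Y))) <= / (k * (Y * Y))).
{ rewrite exp_Ropp. apply Rinv_le_contravar; auto. now apply poly_le_exp; lra. }
rewrite Rabs_left1.
- replace (2 / (sqrt k * (k * (Y * Y)))) with (2 * / (k * (Y * Y)) / sqrt k) by (field; lra).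
  replace (- (gauss_RInt (sqrt k * Y) / sqrt k - sqrt PI / 2 / sqrt k))
    with ((sqrt PI / 2 - gauss_RInt (sqrt k * Y)) / sqrt k) by (field; lra).
  unfold Rdiv. apply Rmult_le_compat_r; [left; now apply Rinv_0_lt_compat | lra].
- replace (gauss_RInt (sqrt k * Y) / sqrt k - sqrt PI / 2 / sqrt k)
    with ((gauss_RInt (sqrt k * Y) - sqrt PI / 2) / sqrt k) by (field; lra).
  apply Rmult_le_0_r; [lra | left; now apply Rinv_0_lt_compat].
Qed.

Lemma RInt_gauss_scaled_le n a Y : 0 < n -> 0 < a -> 0 <= Y ->
  RInt (gauss (n * a)) 0 Y <= sqrt PI / 2 / sqrt a / sqrt n.
Proof.
intros Hn Ha HY. assert (0 < sqrt n) by now apply sqrt_lt_R0. assert (0 < sqrt a) by now apply sqrt_lt_R0.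
replace (sqrt PI / 2 / sqrt a / sqrt n) with (sqrt PI / 2 / sqrt (n * a)) by (rewrite sqrt_mult by lra; field; lra).
apply RInt_gauss_le_0; [nra | auto].
Qed.

Lemma RInt_gauss_scaled_near n a Y : 0 < n -> 0 < a -> 0 < Y ->
  Rabs (RInt (gauss (n * a)) 0 Y - sqrt PI / 2 / sqrt a / sqrt n) <= 2 / (sqrt a * (a * (Y * Y))) / (n * sqrt n).
Proof.
intros Hn Ha HY. assert (0 < sqrt n) by now apply sqrt_lt_R0. assert (0 < sqrt a) by now apply sqrt_lt_R0.
replace (sqrt PI / 2 / sqrt a / sqrt n) with (sqrt PI / 2 / sqrt (n * a)) by (rewrite sqrt_mult by lra; field; lra).
replace (2 / (sqrt a * (a * (Y * Y))) / (n * sqrt n)) with (2 / (sqrt (n * a) * (n * a * (Y * Y))))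
  by (rewrite sqrt_mult by lra; field; repeat split; nra).
apply RInt_gauss_near; [nra | auto].
Qed.

Lemma RInt_gauss_laplace_term n a d : 0 < n -> 0 < a -> 0 < d ->
  Rabs (2 * RInt (gauss (n * (a / 2))) 0 d - sqrt (2 * PI / (n * a)))
    <= 4 / (sqrt (a / 2) * (a / 2 * (d * d))) / (n * sqrt n).
Proof.
intros Hn Ha Hd. assert (0 < sqrt n) by now apply sqrt_lt_R0. assert (0 < sqrt (a / 2)) by (apply sqrt_lt_R0; lra).
replace (2 * PI / (n * a)) with (PI / (n * (a / 2))) by (field; lra).
rewrite sqrt_div_alt, (sqrt_mult n (a / 2)) by (try apply Rmult_lt_0_compat; lra).
replace (2 * RInt (gauss (n * (a / 2))) 0 d - sqrt PI / (sqrt n * sqrt (a / 2)))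
  with (2 * (RInt (gauss (n * (a / 2))) 0 d - sqrt PI / 2 / sqrt (a / 2) / sqrt n)) by (field; lra).
rewrite Rabs_mult, (Rabs_right 2) by lra.
replace (4 / (sqrt (a / 2) * (a / 2 * (d * d))) / (n * sqrt n))
  with (2 * (2 / (sqrt (a / 2) * (a / 2 * (d * d))) / (n * sqrt n))) by (field; repeat split; nra).
apply Rmult_le_compat_l; [lra | apply RInt_gauss_scaled_near; lra].
Qed.

Lemma ln1p_pair_abs_le u : 0 <= u <= 1/2 ->
  Rabs (ln (1 + u)) <= 2 * u /\ Rabs (ln (1 - u)) <= 2 * u /\
  Rabs (ln (1 + u) + ln (1 - u)) <= 2 * u ^ 2.
Proof.
intros Hu. assert (Hu' : Rabs u = u) by (apply Rabs_right; lra).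
split; [| split].
- replace (2 * u) with (2 * Rabs u) by lra. apply ln1p_abs_le. lra.
- replace (1 - u) with (1 + - u) by ring. replace (2 * u) with (2 * Rabs (- u)) by (rewrite Rabs_Ropp; lra).
  apply ln1p_abs_le. rewrite Rabs_Ropp. lra.
- rewrite <- ln_mult by lra. replace ((1 + u) * (1 - u)) with (1 + - u ^ 2) by ring.
  replace (2 * u ^ 2) with (2 * Rabs (- u ^ 2)) by (rewrite Rabs_Ropp, Rabs_right; nra).
  apply ln1p_abs_le. rewrite Rabs_Ropp, Rabs_right; nra.
Qed.

(* [D t <= a / 4] bounds the cubic terms [n D t^3] by [n a t^2 / 4]: they cost only half of the
   Gaussian decay [exp (- n a t^2 / 2)]. *)
Lemma exp_pair_sub_2_le A A0 S D B n a t x y :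
  0 <= A -> 0 <= S -> 0 <= D -> 0 <= B -> 0 <= n -> 0 <= t -> A * t <= A0 -> D * t <= a / 4 ->
  Rabs x <= A * t + n * D * t ^ 3 -> Rabs y <= A * t + n * D * t ^ 3 ->
  Rabs (x + y) <= S * t ^ 2 + n * B * t ^ 4 ->
  Rabs (exp x + exp y - 2) <=
    (4 * (A ^ 2 + D ^ 2) * exp A0 + S + B) * (t ^ 2 + n * t ^ 4 + n ^ 2 * t ^ 6) * exp (n * a * t ^ 2 / 4).
Proof.
intros HA HS HD HB Hn Ht HA0 Ha Hx Hy Hxy.
set (L := A * t + n * D * t ^ 3).
set (E := exp (n * a * t ^ 2 / 4)).
assert (Ht2 : 0 <= t ^ 2) by (apply pow_le; lra).
assert (Hnat : 0 <= n * a * t ^ 2) by (assert (0 <= D * t) by nra; apply Rmult_le_pos; nra).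
assert (HE1 : 1 <= E) by (unfold E; rewrite <- exp_0; apply exp_le_compat; lra).
assert (HeL : exp L <= exp A0 * E).
{ unfold E. rewrite <- exp_plus. apply exp_le_compat. unfold L.
  assert (n * D * t ^ 3 <= n * a * t ^ 2 / 4); [| lra].
  replace (n * D * t ^ 3) with (n * t ^ 2 * (D * t)) by ring.
  replace (n * a * t ^ 2 / 4) with (n * t ^ 2 * (a / 4)) by field.
  apply Rmult_le_compat_l; [apply Rmult_le_pos |]; lra. }
assert (HL2 : L ^ 2 <= 2 * A ^ 2 * t ^ 2 + 2 * D ^ 2 * (n ^ 2 * t ^ 6)).
{ unfold L. assert (0 <= (A * t - n * D * t ^ 3) ^ 2) by apply pow2_ge_0. nra. }
assert (H := exp_add_exp_sub_2_abs_le x y L Hx Hy).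
assert (HeA : 0 < exp A0) by apply exp_pos.
assert (Hnt4 : 0 <= n * t ^ 4) by (apply Rmult_le_pos; [lra | apply pow_le; lra]).
assert (Hnt6 : 0 <= n ^ 2 * t ^ 6) by (apply Rmult_le_pos; [apply pow_le | apply pow_le]; lra).
assert (HL2e : 2 * L ^ 2 * exp L <= 4 * (A ^ 2 + D ^ 2) * exp A0 * (t ^ 2 + n * t ^ 4 + n ^ 2 * t ^ 6) * E).
{ apply Rle_trans with (2 * (2 * A ^ 2 * t ^ 2 + 2 * D ^ 2 * (n ^ 2 * t ^ 6)) * (exp A0 * E)).
  - apply Rmult_le_compat; [apply Rmult_le_pos; [lra | apply pow2_ge_0] | left; apply exp_pos | lra | auto].
  - assert (0 <= A ^ 2) by apply pow2_ge_0. assert (0 <= D ^ 2) by apply pow2_ge_0.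
    assert (0 <= exp A0 * E) by nra.
    assert (0 <= A ^ 2 * (n * t ^ 4 + n ^ 2 * t ^ 6) + D ^ 2 * (t ^ 2 + n * t ^ 4)) by
      (apply Rplus_le_le_0_compat; apply Rmult_le_pos; lra).
    assert (0 <= 4 * (exp A0 * E) * (A ^ 2 * (n * t ^ 4 + n ^ 2 * t ^ 6) + D ^ 2 * (t ^ 2 + n * t ^ 4)))
      by (apply Rmult_le_pos; lra).
    nra. }
assert (HSB : S * t ^ 2 + n * B * t ^ 4 <= (S + B) * (t ^ 2 + n * t ^ 4 + n ^ 2 * t ^ 6) * E).
{ assert (0 <= S * (n * t ^ 4 + n ^ 2 * t ^ 6) + B * (t ^ 2 + n ^ 2 * t ^ 6)) by
    (apply Rplus_le_le_0_compat; apply Rmult_le_pos; lra).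
  assert (0 <= (S + B) * (t ^ 2 + n * t ^ 4 + n ^ 2 * t ^ 6)) by (apply Rmult_le_pos; lra).
  apply Rle_trans with ((S + B) * (t ^ 2 + n * t ^ 4 + n ^ 2 * t ^ 6)); nra. }
lra.
Qed.

Definition absorb_const (a : R) : R := 8 / a + 256 / a ^ 2 + 13824 / a ^ 3.

Lemma absorb_const_pos a : 0 < a -> 0 < absorb_const a.
Proof.
intros Ha. unfold absorb_const.
repeat apply Rplus_lt_0_compat; apply Rdiv_lt_0_compat; try lra; now apply pow_lt.
Qed.

(* With [y := n a t^2 / 8], each monomial [n^(j-1) t^(2j)] is [y^j / n] up to a constant,
   and [y^j <= C exp y]. *)
Lemma poly_gauss_absorb n a t : 0 < n -> 0 < a ->
  (t ^ 2 + n * t ^ 4 + n ^ 2 * t ^ 6) * exp (n * a * t ^ 2 / 4) * gauss (n * (a / 2)) t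
  <= absorb_const a / n * gauss (n * (a / 8)) t.
Proof.
intros Hn Ha. unfold absorb_const. set (y := n * a * t ^ 2 / 8).
assert (Hy : 0 <= y).
{ unfold y. assert (0 <= t ^ 2) by apply pow2_ge_0.
  apply Rmult_le_pos; [apply Rmult_le_pos; [nra | auto] | lra]. }
destruct (poly_le_exp y Hy) as [P1 [P2 P3]].
assert (Ee : exp (n * a * t ^ 2 / 4) * gauss (n * (a / 2)) t = gauss (n * (a / 8)) t * / exp y).
{ unfold gauss. rewrite <- exp_Ropp, <- !exp_plus. f_equal. unfold y. simpl. field. }
assert (Et2 : t ^ 2 = 8 * y / (n * a)) by (unfold y; field; lra).
assert (Hey : 0 < exp y) by apply exp_pos.
assert (Hg : 0 < gauss (n * (a / 8)) t) by apply exp_pos.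
rewrite Rmult_assoc, Ee.
replace (t ^ 2 + n * t ^ 4 + n ^ 2 * t ^ 6) with (t ^ 2 + n * (t ^ 2) ^ 2 + n ^ 2 * (t ^ 2) ^ 3) by ring.
rewrite Et2.
replace ((8 * y / (n * a) + n * (8 * y / (n * a)) ^ 2 + n ^ 2 * (8 * y / (n * a)) ^ 3) * (gauss (n * (a / 8)) t * / exp y))
  with ((8 / a * y + 64 / a ^ 2 * y ^ 2 + 512 / a ^ 3 * y ^ 3) / exp y / n * gauss (n * (a / 8)) t)
  by (field; lra).
apply Rmult_le_compat_r; [lra |]. apply Rmult_le_compat_r; [left; now apply Rinv_0_lt_compat |].
apply (Rmult_le_reg_r (exp y)); auto.
replace ((8 / a * y + 64 / a ^ 2 * y ^ 2 + 512 / a ^ 3 * y ^ 3) / exp y * exp y)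
  with (8 / a * y + 64 / a ^ 2 * y ^ 2 + 512 / a ^ 3 * y ^ 3) by (field; lra).
assert (0 < / a) by now apply Rinv_0_lt_compat.
assert (0 < / a ^ 2) by (apply Rinv_0_lt_compat, pow_lt; auto).
assert (0 < / a ^ 3) by (apply Rinv_0_lt_compat, pow_lt; auto).
unfold Rdiv. nra.
Qed.

Lemma exp_decay_le eps n : 0 < eps -> 1 <= n ->
  exp (- ((n - 1) * eps)) <= 4 * exp eps / (eps * eps) / (n * sqrt n).
Proof.
intros He Hn.
assert (Hsn : 0 < sqrt n) by (apply sqrt_lt_R0; lra).
assert (Hsn1 : sqrt n <= n) by (rewrite <- (sqrt_square n) at 2 by lra; apply sqrt_le_1_alt; nra).
destruct (poly_le_exp (n * eps) ltac:(nra)) as [_ [P2 _]].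
replace (- ((n - 1) * eps)) with (eps + - (n * eps)) by ring. rewrite exp_plus, exp_Ropp.
assert (Hee : 0 < exp eps) by apply exp_pos.
assert (Hen : 0 < exp (n * eps)) by apply exp_pos.
assert (Hne : 0 < n * eps) by nra.
apply Rle_trans with (exp eps * (4 / (n * eps) ^ 2)).
- apply Rmult_le_compat_l; [lra |].
  apply (Rmult_le_reg_r (exp (n * eps))); auto. rewrite Rinv_l by lra.
  apply (Rmult_le_reg_l ((n * eps) ^ 2)); [now apply pow_lt |].
  replace ((n * eps) ^ 2 * (4 / (n * eps) ^ 2 * exp (n * eps))) with (4 * exp (n * eps)) by (field; lra). lra.
- replace (exp eps * (4 / (n * eps) ^ 2)) with (4 * exp eps / (eps * eps) / (n * n)) by (field; lra).
  unfold Rdiv at 1 3. apply Rmult_le_compat_l.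
  + apply Rmult_le_pos; [lra | left; apply Rinv_0_lt_compat; nra].
  + apply Rinv_le_contravar; [nra | apply Rmult_le_compat_l; lra].
Qed.

Section Laplace.

Variables q C r alpha : R.
Hypothesis r_pos : 0 < r.
Hypothesis C_pos : 0 < C.
Hypothesis C_lt : C < 1 + r * r.
Hypothesis q_crit : q = r - C * r / (1 + r * r).

(* [q_crit] says that [r] is the critical point of [phase], and [curv] is [- phase''(r)]. *)
Definition phase (x : R) : R := ln (1 + x * x) - (x - q) * (x - q) / C.

Definition curv : R := 2 / C - 2 * (1 - r * r) / ((1 + r * r) * (1 + r * r)).

Definition decay : R := 1 / C - 1 / (1 + r * r).

Definition phase_rem (t : R) : R := phase (r + t) - phase r + curv * t ^ 2 / 2.

Definition laplace_integrand (n x : R) : R := Rpower x alpha * exp (n * (phase x - phase r)).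

Lemma q_bounds : 0 < q < r.
Proof.
subst q. assert (0 < C * r / (1 + r * r) < r); [| lra].
split; [apply Rdiv_lt_0_compat; nra |].
apply (Rmult_lt_reg_r (1 + r * r)); [nra |]. unfold Rdiv. rewrite Rmult_assoc, Rinv_l by nra. nra.
Qed.

Lemma curv_pos : 0 < curv.
Proof.
unfold curv. assert (/ (1 + r * r) < / C) by (apply Rinv_lt_contravar; nra).
assert (2 / (1 + r * r) - 2 * (1 - r * r) / ((1 + r * r) * (1 + r * r)) = 4 * (r * r) / ((1 + r * r) * (1 + r * r)))
  by (field; nra).
assert (0 < 4 * (r * r) / ((1 + r * r) * (1 + r * r))) by (apply Rdiv_lt_0_compat; nra).
unfold Rdiv in *. lra.
Qed.

Lemma decay_pos : 0 < decay.
Proof.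
unfold decay. assert (/ (1 + r * r) < / C) by (apply Rinv_lt_contravar; nra). unfold Rdiv. lra.
Qed.

Lemma phase_sub_le x : phase x - phase r <= - decay * ((x - r) * (x - r)).
Proof.
unfold phase, decay. assert (Hm : 0 < 1 + r * r) by nra. assert (Hx : 0 < 1 + x * x) by nra.
assert (H := ln_le_sub_1 ((1 + x * x) / (1 + r * r)) ltac:(now apply Rdiv_lt_0_compat)).
rewrite ln_div in H by auto.
assert (E : (1 + x * x) / (1 + r * r) - 1 - ((x - q) * (x - q) - (r - q) * (r - q)) / C
            = - (1 / C - 1 / (1 + r * r)) * ((x - r) * (x - r))) by (subst q; field; lra).
lra.
Qed.

Definition rel_incr (t : R) : R := (2 * r * t + t * t) / (1 + r * r).

Definition cubic_coef (t : R) : R :=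
  (2 * r + t) ^ 3 / (3 * (1 + r * r) ^ 3) - (4 * r + t) / (2 * (1 + r * r) ^ 2).

Definition quartic_coef (t : R) : R :=
  (24 * r * r + 2 * t * t) / (3 * (1 + r * r) ^ 3) - 1 / ((1 + r * r) * (1 + r * r)).

(* [1 + (r + t)^2 = (1 + r^2) (1 + rel_incr t)]; expanding [ln (1 + s)] to third order, the
   quadratic terms cancel against [curv] and the linear ones by [q_crit]. *)
Lemma phase_rem_eq t : phase_rem t = ln1p_rem3 (rel_incr t) + t ^ 3 * cubic_coef t.
Proof.
unfold phase_rem, phase, ln1p_rem3, rel_incr, cubic_coef, curv.
assert (Hm : 0 < 1 + r * r) by nra.
assert (Hx : 0 < 1 + (r + t) * (r + t)) by (pose proof (Rle_0_sqr (r + t)); unfold Rsqr in *; lra).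
replace (1 + (2 * r * t + t * t) / (1 + r * r)) with ((1 + (r + t) * (r + t)) / (1 + r * r)) by (field; lra).
rewrite ln_div by auto. subst q. field. lra.
Qed.

Lemma phase_rem_even_eq t : phase_rem t + phase_rem (- t)
  = ln1p_rem3 (rel_incr t) + ln1p_rem3 (rel_incr (- t)) + t ^ 4 * quartic_coef t.
Proof. rewrite !phase_rem_eq. unfold cubic_coef, quartic_coef. field. nra. Qed.

Lemma rel_incr_abs_le t : 0 <= t <= 1 ->
  Rabs (rel_incr t) <= (2 * r + 1) / (1 + r * r) * t /\
  Rabs (rel_incr (- t)) <= (2 * r + 1) / (1 + r * r) * t.
Proof.
intros Ht. assert (Hm : 0 < 1 + r * r) by nra. unfold rel_incr.
split; apply Rabs_le_between; split;
  apply (Rmult_le_reg_r (1 + r * r)); auto; field_simplify; try lra; nra.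
Qed.

Lemma ln1p_rem3_rel_incr_abs_le t : 0 <= t <= Rmin 1 ((1 + r * r) / (2 * (2 * r + 1))) ->
  Rabs (ln1p_rem3 (rel_incr t)) <= 2 * ((2 * r + 1) / (1 + r * r)) ^ 4 * t ^ 4 /\
  Rabs (ln1p_rem3 (rel_incr (- t))) <= 2 * ((2 * r + 1) / (1 + r * r)) ^ 4 * t ^ 4.
Proof.
intros [Ht0 Ht1]. assert (Hm : 0 < 1 + r * r) by nra.
set (c1 := (2 * r + 1) / (1 + r * r)).
assert (Hct : c1 * t <= 1 / 2).
{ apply Rle_trans with (c1 * ((1 + r * r) / (2 * (2 * r + 1)))).
  - apply Rmult_le_compat_l; [unfold c1; apply Rdiv_le_0_compat; lra |].
    eapply Rle_trans; [apply Ht1 | apply Rmin_r].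
  - right. unfold c1. field. lra. }
assert (Ht1' : t <= 1) by (eapply Rle_trans; [apply Ht1 | apply Rmin_l]).
destruct (rel_incr_abs_le t ltac:(lra)) as [Sp Sm]. fold c1 in Sp, Sm.
replace (2 * c1 ^ 4 * t ^ 4) with (2 * (c1 * t) ^ 4) by ring.
split; now apply ln1p_rem3_abs_le.
Qed.

Lemma cubic_coef_abs_le t : -1 <= t <= 1 ->
  Rabs (cubic_coef t) <= (2 * r + 1) ^ 3 / (3 * (1 + r * r) ^ 3) + (4 * r + 1) / (2 * (1 + r * r) ^ 2).
Proof.
intros Ht. unfold cubic_coef. assert (Hm : 0 < 1 + r * r) by nra.
assert (P3 : 0 < / (3 * (1 + r * r) ^ 3)) by (apply Rinv_0_lt_compat, Rmult_lt_0_compat; [lra | now apply pow_lt]).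
assert (P2 : 0 < / (2 * (1 + r * r) ^ 2)) by (apply Rinv_0_lt_compat, Rmult_lt_0_compat; [lra | now apply pow_lt]).
eapply Rle_trans; [apply Rabs_triang |]. rewrite Rabs_Ropp. unfold Rdiv. rewrite !Rabs_mult, !(Rabs_right (/ _)) by lra.
apply Rplus_le_compat; apply Rmult_le_compat_r; try lra.
- rewrite <- RPow_abs. apply pow_incr. split; [apply Rabs_pos | apply Rabs_le; lra].
- apply Rabs_le. lra.
Qed.

Lemma quartic_coef_abs_le t : -1 <= t <= 1 ->
  Rabs (quartic_coef t) <= (24 * r * r + 2) / (3 * (1 + r * r) ^ 3) + 1 / ((1 + r * r) * (1 + r * r)).
Proof.
intros Ht. unfold quartic_coef. assert (Hm : 0 < 1 + r * r) by nra.
assert (P3 : 0 < 3 * (1 + r * r) ^ 3) by (apply Rmult_lt_0_compat; [lra | now apply pow_lt]).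
eapply Rle_trans; [apply Rabs_triang |]. rewrite Rabs_Ropp.
rewrite !Rabs_right by (apply Rle_ge, Rdiv_le_0_compat; nra).
apply Rplus_le_compat_r. unfold Rdiv. apply Rmult_le_compat_r; [left; now apply Rinv_0_lt_compat | nra].
Qed.

Lemma phase_rem_bounds : exists d D B, 0 < d /\ 0 <= D /\ 0 <= B /\
  forall t, 0 <= t <= d ->
    Rabs (phase_rem t) <= D * t ^ 3 /\ Rabs (phase_rem (- t)) <= D * t ^ 3 /\
    Rabs (phase_rem t + phase_rem (- t)) <= B * t ^ 4.
Proof.
set (m := 1 + r * r). assert (Hm : 0 < m) by (unfold m; nra).
set (L0 := 2 * ((2 * r + 1) / m) ^ 4). assert (HL0 : 0 <= L0) by (apply Rmult_le_pos, pow_le; [lra |]; apply Rdiv_le_0_compat; lra).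
set (Q0 := (2 * r + 1) ^ 3 / (3 * m ^ 3) + (4 * r + 1) / (2 * m ^ 2)).
set (V0 := (24 * r * r + 2) / (3 * m ^ 3) + 1 / (m * m)).
assert (P2 : 0 < 2 * m ^ 2) by (apply Rmult_lt_0_compat; [lra | now apply pow_lt]).
assert (P3 : 0 < 3 * m ^ 3) by (apply Rmult_lt_0_compat; [lra | now apply pow_lt]).
assert (HQ0 : 0 <= Q0) by (apply Rplus_le_le_0_compat; apply Rdiv_le_0_compat; try apply pow_le; lra).
assert (HV0 : 0 <= V0) by (apply Rplus_le_le_0_compat; apply Rdiv_le_0_compat; nra).
exists (Rmin 1 (m / (2 * (2 * r + 1)))), (L0 + Q0), (2 * L0 + V0).
split; [apply Rmin_pos; [lra | apply Rdiv_lt_0_compat; lra] |]. split; [lra |]. split; [lra |].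
intros t Ht.
assert (Ht1 : t <= 1) by (eapply Rle_trans; [apply Ht | apply Rmin_l]).
destruct (ln1p_rem3_rel_incr_abs_le t Ht) as [Lp Lm]. fold m L0 in Lp, Lm.
assert (Qp := cubic_coef_abs_le t ltac:(lra)). assert (Qm := cubic_coef_abs_le (- t) ltac:(lra)).
assert (HV := quartic_coef_abs_le t ltac:(lra)). fold m Q0 in Qp, Qm. fold m V0 in HV.
assert (Ht3 : 0 <= t ^ 3) by (apply pow_le; lra).
assert (Ht4 : 0 <= t ^ 4) by (apply pow_le; lra).
assert (L0 * t ^ 4 <= L0 * t ^ 3) by (apply Rmult_le_compat_l; [| replace (t ^ 4) with (t ^ 3 * t) by ring]; nra).
split; [| split].
- rewrite phase_rem_eq. eapply Rle_trans; [apply Rabs_triang |].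
  rewrite Rabs_mult, (Rabs_right (t ^ 3)) by lra.
  assert (t ^ 3 * Rabs (cubic_coef t) <= t ^ 3 * Q0) by (apply Rmult_le_compat_l; auto). lra.
- rewrite phase_rem_eq. eapply Rle_trans; [apply Rabs_triang |].
  replace ((- t) ^ 3) with (- t ^ 3) by ring. rewrite Rabs_mult, Rabs_Ropp, (Rabs_right (t ^ 3)) by lra.
  assert (t ^ 3 * Rabs (cubic_coef (- t)) <= t ^ 3 * Q0) by (apply Rmult_le_compat_l; auto). lra.
- rewrite phase_rem_even_eq.
  eapply Rle_trans; [apply Rabs_triang |].
  eapply Rle_trans; [apply Rplus_le_compat_r, Rabs_triang |].
  rewrite Rabs_mult, (Rabs_right (t ^ 4)) by lra.
  assert (t ^ 4 * Rabs (quartic_coef t) <= t ^ 4 * V0) by (apply Rmult_le_compat_l; auto).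
  lra.
Qed.

Definition local_exponent (n t : R) : R := alpha * ln (1 + t / r) + n * phase_rem t.

Lemma laplace_integrand_near n t : Rabs t < r ->
  laplace_integrand n (r + t) = Rpower r alpha * exp (local_exponent n t) * gauss (n * (curv / 2)) t.
Proof.
intros Ht. apply Rabs_def2 in Ht.
assert (0 < 1 + t / r) by (apply (Rmult_lt_reg_r r); auto; field_simplify; lra).
unfold laplace_integrand, local_exponent, Rpower, gauss.
replace (phase (r + t) - phase r) with (phase_rem t - curv * t ^ 2 / 2) by (unfold phase_rem; ring).
replace (r + t) with (r * (1 + t / r)) by (field; lra).
rewrite ln_mult by lra. rewrite <- !exp_plus. f_equal. field.
Qed.

Lemma local_exponent_bounds n t D B : 0 <= n -> 0 <= t <= r / 2 ->
  Rabs (phase_rem t) <= D * t ^ 3 -> Rabs (phase_rem (- t)) <= D * t ^ 3 ->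
  Rabs (phase_rem t + phase_rem (- t)) <= B * t ^ 4 ->
  Rabs (local_exponent n t) <= 2 * Rabs alpha / r * t + n * D * t ^ 3 /\
  Rabs (local_exponent n (- t)) <= 2 * Rabs alpha / r * t + n * D * t ^ 3 /\
  Rabs (local_exponent n t + local_exponent n (- t)) <= 2 * Rabs alpha / (r * r) * t ^ 2 + n * B * t ^ 4.
Proof.
intros Hn Ht W1 W2 W3.
destruct (ln1p_pair_abs_le (t / r)) as [L1 [L2 L3]].
{ split; [apply Rdiv_le_0_compat; lra |]. apply (Rmult_le_reg_r r); auto. field_simplify; lra. }
assert (Hm : 1 + - t / r = 1 - t / r) by (field; lra).
assert (Hal : forall u v, Rabs u <= v -> Rabs (alpha * u) <= Rabs alpha * v)
  by (intros; rewrite Rabs_mult; apply Rmult_le_compat_l; [apply Rabs_pos | auto]).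
assert (Hnr : forall u v, Rabs u <= v -> Rabs (n * u) <= n * v)
  by (intros; rewrite Rabs_mult, Rabs_right by lra; apply Rmult_le_compat_l; lra).
unfold local_exponent. rewrite Hm. split; [| split].
- eapply Rle_trans; [apply Rabs_triang |]. rewrite Rmult_assoc.
  replace (2 * Rabs alpha / r * t) with (Rabs alpha * (2 * (t / r))) by (field; lra).
  apply Rplus_le_compat; auto.
- eapply Rle_trans; [apply Rabs_triang |]. rewrite Rmult_assoc.
  replace (2 * Rabs alpha / r * t) with (Rabs alpha * (2 * (t / r))) by (field; lra).
  apply Rplus_le_compat; auto.
- replace (alpha * ln (1 + t / r) + n * phase_rem t + (alpha * ln (1 - t / r) + n * phase_rem (- t)))
    with (alpha * (ln (1 + t / r) + ln (1 - t / r)) + n * (phase_rem t + phase_rem (- t))) by ring.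
  eapply Rle_trans; [apply Rabs_triang |]. rewrite Rmult_assoc.
  replace (2 * Rabs alpha / (r * r) * t ^ 2) with (Rabs alpha * (2 * (t / r) ^ 2)) by (field; lra).
  apply Rplus_le_compat; auto.
Qed.

Definition pair_const (D B : R) : R :=
  4 * ((2 * Rabs alpha / r) ^ 2 + D ^ 2) * exp (Rabs alpha) + 2 * Rabs alpha / (r * r) + B.

Lemma pair_const_nonneg D B : 0 <= D -> 0 <= B -> 0 <= pair_const D B.
Proof.
intros HD HB. assert (0 <= (2 * Rabs alpha / r) ^ 2) by apply pow2_ge_0. assert (0 <= D ^ 2) by apply pow2_ge_0.
assert (0 < exp (Rabs alpha)) by apply exp_pos. assert (Hal := Rabs_pos alpha).
assert (0 <= 2 * Rabs alpha / (r * r)) by (apply Rdiv_le_0_compat; nra).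
unfold pair_const. nra.
Qed.

Lemma laplace_pair_le_at n t D B : 1 <= n -> 0 <= D -> 0 <= B -> 0 <= t <= r / 2 -> D * t <= curv / 4 ->
  Rabs (phase_rem t) <= D * t ^ 3 -> Rabs (phase_rem (- t)) <= D * t ^ 3 ->
  Rabs (phase_rem t + phase_rem (- t)) <= B * t ^ 4 ->
  Rabs (laplace_integrand n (r + t) + laplace_integrand n (r - t)
        - 2 * Rpower r alpha * gauss (n * (curv / 2)) t)
    <= Rpower r alpha * pair_const D B * absorb_const curv / n * gauss (n * (curv / 8)) t.
Proof.
intros Hn HD HB Ht HDt W1 W2 W3.
assert (Ha := curv_pos). set (a := curv) in *.
set (h0 := Rpower r alpha). assert (Hh0 : 0 < h0) by apply exp_pos.
assert (Hal := Rabs_pos alpha).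
destruct (local_exponent_bounds n t D B ltac:(lra) Ht W1 W2 W3) as [Hx [Hy Hxy]].
assert (HAt : 2 * Rabs alpha / r * t <= Rabs alpha) by (apply (Rmult_le_reg_r r); auto; field_simplify; nra).
assert (HA : 0 <= 2 * Rabs alpha / r) by (apply Rdiv_le_0_compat; lra).
assert (HS : 0 <= 2 * Rabs alpha / (r * r)) by (apply Rdiv_le_0_compat; nra).
assert (Hpair := exp_pair_sub_2_le _ (Rabs alpha) _ D B n a t _ _ HA HS HD HB ltac:(lra) ltac:(lra)
                   HAt HDt Hx Hy Hxy).
replace (4 * ((2 * Rabs alpha / r) ^ 2 + D ^ 2) * exp (Rabs alpha) + 2 * Rabs alpha / (r * r) + B)
  with (pair_const D B) in Hpair by reflexivity.
replace (r - t) with (r + - t) by ring.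
rewrite !laplace_integrand_near, gauss_opp by (rewrite ?Rabs_Ropp; apply Rabs_def1; lra).
fold a h0. set (G := gauss (n * (a / 2)) t). assert (HG : 0 < G) by apply exp_pos.
replace (h0 * exp (local_exponent n t) * G + h0 * exp (local_exponent n (- t)) * G - 2 * h0 * G)
  with (h0 * G * (exp (local_exponent n t) + exp (local_exponent n (- t)) - 2)) by ring.
rewrite Rabs_mult, Rabs_right by (apply Rle_ge, Rmult_le_pos; lra).
apply Rle_trans with (h0 * G * (pair_const D B * (t ^ 2 + n * t ^ 4 + n ^ 2 * t ^ 6) * exp (n * a * t ^ 2 / 4))).
- apply Rmult_le_compat_l; [apply Rmult_le_pos |]; lra.
- replace (h0 * pair_const D B * absorb_const a / n * gauss (n * (a / 8)) t)
    with (h0 * pair_const D B * (absorb_const a / n * gauss (n * (a / 8)) t)) by (field; lra).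
  replace (h0 * G * (pair_const D B * (t ^ 2 + n * t ^ 4 + n ^ 2 * t ^ 6) * exp (n * a * t ^ 2 / 4)))
    with (h0 * pair_const D B * ((t ^ 2 + n * t ^ 4 + n ^ 2 * t ^ 6) * exp (n * a * t ^ 2 / 4) * G)) by ring.
  apply Rmult_le_compat_l; [apply Rmult_le_pos; [lra | now apply pair_const_nonneg] |].
  apply poly_gauss_absorb; lra.
Qed.

Lemma laplace_pair_le : exists d K, 0 < d /\ d <= r - q /\ 0 <= K /\
  forall n t, 1 <= n -> 0 <= t <= d ->
  Rabs (laplace_integrand n (r + t) + laplace_integrand n (r - t)
        - 2 * Rpower r alpha * gauss (n * (curv / 2)) t) <= K / n * gauss (n * (curv / 8)) t.
Proof.
destruct phase_rem_bounds as [d1 [D [B [Hd1 [HD [HB Hrem]]]]]].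
assert (Ha := curv_pos). assert (Hq := q_bounds).
set (d := Rmin (Rmin d1 (r - q)) (Rmin (r / 2) (curv / (4 * (D + 1))))).
assert (Hd : 0 < d) by (repeat apply Rmin_pos; try lra; apply Rdiv_lt_0_compat; lra).
assert (Hdd : d <= d1 /\ d <= r - q /\ d <= r / 2 /\ d <= curv / (4 * (D + 1))).
{ assert (H1 := Rmin_l (Rmin d1 (r - q)) (Rmin (r / 2) (curv / (4 * (D + 1))))).
  assert (H2 := Rmin_r (Rmin d1 (r - q)) (Rmin (r / 2) (curv / (4 * (D + 1))))).
  assert (H3 := Rmin_l d1 (r - q)). assert (H4 := Rmin_r d1 (r - q)).
  assert (H5 := Rmin_l (r / 2) (curv / (4 * (D + 1)))). assert (H6 := Rmin_r (r / 2) (curv / (4 * (D + 1)))).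
  fold d in H1, H2. lra. }
exists d, (Rpower r alpha * pair_const D B * absorb_const curv).
split; [auto |]. split; [tauto |]. split.
{ apply Rmult_le_pos; [apply Rmult_le_pos; [left; apply exp_pos | now apply pair_const_nonneg] |].
  left; now apply absorb_const_pos. }
intros n t Hn Ht. destruct (Hrem t ltac:(lra)) as [W1 [W2 W3]].
apply laplace_pair_le_at; auto; [lra |].
apply Rle_trans with ((D + 1) * (curv / (4 * (D + 1)))); [apply Rmult_le_compat; lra | right; field; lra].
Qed.

Lemma laplace_integrand_continuous n x : 0 < x -> continuous (laplace_integrand n) x.
Proof.
intros Hx. unfold laplace_integrand, phase, Rpower.
apply (ex_derive_continuous (fun x => exp (alpha * ln x) * exp (n * (ln (1 + x * x) - (x - q) * (x - q) / C
                                        - (ln (1 + r * r) - (r - q) * (r - q) / C))))).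
auto_derive. repeat split; try lra; nra.
Qed.

Lemma ex_RInt_laplace_integrand n x y : 0 < x <= y -> ex_RInt (laplace_integrand n) x y.
Proof.
intros Hxy. apply ex_RInt_cont; [lra |]. intros; apply laplace_integrand_continuous; lra.
Qed.

Lemma RInt_laplace_center : exists d K, 0 < d /\ d <= r - q /\
  forall n, 1 <= n ->
  Rabs (RInt (laplace_integrand n) (r - d) (r + d) - Rpower r alpha * sqrt (2 * PI / (n * curv)))
    <= K / (n * sqrt n).
Proof.
destruct laplace_pair_le as [d [K [Hd [Hdq [HK Hpair]]]]].
assert (Ha := curv_pos). assert (Hq := q_bounds). set (a := curv) in *.
set (h0 := Rpower r alpha). assert (Hh0 : 0 < h0) by apply exp_pos.
assert (Hsa2 : 0 < sqrt (a / 2)) by (apply sqrt_lt_R0; lra).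
assert (Hsa8 : 0 < sqrt (a / 8)) by (apply sqrt_lt_R0; lra).
set (K1 := K * (sqrt PI / 2) / sqrt (a / 8)). set (K2 := h0 * (4 / (sqrt (a / 2) * (a / 2 * (d * d))))).
exists d, (K1 + K2). split; [auto | split; [auto |]]. intros n Hn.
assert (Hsn : 0 < sqrt n) by (apply sqrt_lt_R0; lra).
set (F := laplace_integrand n).
assert (Hsplit := is_RInt_symmetric_split F r d ltac:(lra)
                    (fun x Hx => laplace_integrand_continuous n x ltac:(lra))).
rewrite <- (is_RInt_unique _ _ _ _ Hsplit).
set (I2 := RInt (gauss (n * (a / 2))) 0 d). set (I8 := RInt (gauss (n * (a / 8))) 0 d).
assert (Hclose : Rabs (RInt (fun t => F (r + t) + F (r - t)) 0 d - 2 * h0 * I2) <= K / n * I8).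
{ unfold I2, I8. rewrite <- (RInt_scalR _ (2 * h0)), <- (RInt_scalR _ (K / n)) by apply ex_RInt_gauss_0.
  apply RInt_abs_sub_le; [lra | now exists (RInt F (r - d) (r + d)) | | |].
  - apply (ex_RInt_scal (V := R_NormedModule)), ex_RInt_gauss_0.
  - apply (ex_RInt_scal (V := R_NormedModule)), ex_RInt_gauss_0.
  - intros t Ht. apply Hpair; lra. }
assert (HI8 : K / n * I8 <= K1 / (n * sqrt n)).
{ apply Rle_trans with (K / n * (sqrt PI / 2 / sqrt (a / 8) / sqrt n)).
  - apply Rmult_le_compat_l; [apply Rdiv_le_0_compat; lra | apply RInt_gauss_scaled_le; lra].
  - right. unfold K1. field. lra. }
assert (HI2 : Rabs (2 * h0 * I2 - h0 * sqrt (2 * PI / (n * a))) <= K2 / (n * sqrt n)).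
{ replace (2 * h0 * I2 - h0 * sqrt (2 * PI / (n * a))) with (h0 * (2 * I2 - sqrt (2 * PI / (n * a)))) by ring.
  rewrite Rabs_mult, Rabs_right by lra.
  replace (K2 / (n * sqrt n)) with (h0 * (4 / (sqrt (a / 2) * (a / 2 * (d * d))) / (n * sqrt n)))
    by (unfold K2, Rdiv; ring).
  apply Rmult_le_compat_l; [lra | apply RInt_gauss_laplace_term; lra]. }
replace (RInt (fun t => F (r + t) + F (r - t)) 0 d - h0 * sqrt (2 * PI / (n * a)))
  with ((RInt (fun t => F (r + t) + F (r - t)) 0 d - 2 * h0 * I2) + (2 * h0 * I2 - h0 * sqrt (2 * PI / (n * a))))
  by ring.
eapply Rle_trans; [apply Rabs_triang |].
replace ((K1 + K2) / (n * sqrt n)) with (K1 / (n * sqrt n) + K2 / (n * sqrt n)) by (field; lra).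
lra.
Qed.

Definition far_const : R := exp (Rabs alpha * (Rabs (ln q) + r) + alpha ^ 2 / (2 * decay)).

(* Besides [phase_sub_le], [|alpha ln x| <= |alpha| (|ln q| + r + |x - r|)] and the cross term
   [|alpha| |x - r|] is absorbed by half of the quadratic decay. *)
Lemma laplace_integrand_far_le n d x : 1 <= n -> q <= x -> d * d <= (x - r) * (x - r) ->
  0 <= laplace_integrand n x <= far_const * exp (- ((n - 1) * decay * (d * d))) * gauss (decay / 2) (x - r).
Proof.
intros Hn Hx Hd.
assert (Hk := decay_pos). assert (Hq := q_bounds). set (k := decay) in *.
assert (Hph := phase_sub_le x). fold k in Hph.
unfold laplace_integrand, far_const, Rpower, gauss. split; [apply Rmult_le_pos; left; apply exp_pos |].
rewrite <- !exp_plus. apply exp_le_compat. fold k.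
set (v := x - r) in *.
assert (Hln : Rabs (ln x) <= Rabs (ln q) + x).
{ destruct (Rle_dec 0 (ln x)).
  - rewrite Rabs_right by lra. assert (ln x <= x - 1) by (apply ln_le_sub_1; lra).
    assert (0 <= Rabs (ln q)) by apply Rabs_pos. lra.
  - rewrite Rabs_left by lra. assert (ln q <= ln x) by (apply ln_le; lra).
    assert (- ln q <= Rabs (ln q)) by (rewrite <- Rabs_Ropp; apply Rle_abs). lra. }
assert (H1 : alpha * ln x <= Rabs alpha * (Rabs (ln q) + r + Rabs v)).
{ apply Rle_trans with (Rabs alpha * Rabs (ln x)); [rewrite <- Rabs_mult; apply Rle_abs |].
  apply Rmult_le_compat_l; [apply Rabs_pos |].
  assert (x - r <= Rabs (x - r)) by apply Rle_abs. unfold v in *. lra. }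
assert (H2 : Rabs alpha * Rabs v <= k / 2 * (v * v) + alpha ^ 2 / (2 * k)).
{ assert (0 <= k / 2 * (Rabs v - Rabs alpha / k) ^ 2) by (apply Rmult_le_pos; [lra | apply pow2_ge_0]).
  replace (v * v) with (Rabs v ^ 2) by (rewrite pow2_abs; ring).
  replace (alpha ^ 2) with (Rabs alpha ^ 2) by apply pow2_abs.
  replace (k / 2 * (Rabs v - Rabs alpha / k) ^ 2)
    with (k / 2 * Rabs v ^ 2 - Rabs alpha * Rabs v + Rabs alpha ^ 2 / (2 * k)) in H by (field; lra).
  lra. }
assert (H3 : n * (phase x - phase r) <= - (n * k * (v * v))).
{ apply Rle_trans with (n * (- k * (v * v))); [apply Rmult_le_compat_l; lra | right; ring]. }
assert (H4 : (n - 1) * k * (d * d) <= (n - 1) * k * (v * v)) by (apply Rmult_le_compat_l; [apply Rmult_le_pos |]; lra).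
assert (0 <= Rabs v) by apply Rabs_pos.
lra.
Qed.

Lemma RInt_laplace_left_tail n d : 1 <= n -> 0 < d <= r - q ->
  0 <= RInt (laplace_integrand n) q (r - d) <= r * far_const * exp (- ((n - 1) * decay * (d * d))).
Proof.
intros Hn Hd. assert (Hq := q_bounds). assert (Hk := decay_pos).
set (W := far_const * exp (- ((n - 1) * decay * (d * d)))).
assert (HW : 0 < W) by (apply Rmult_lt_0_compat; apply exp_pos).
assert (Hfar : forall x, q <= x <= r - d -> 0 <= laplace_integrand n x <= W * gauss (decay / 2) (x - r)).
{ intros x Hx. apply laplace_integrand_far_le; [lra | lra |].
  replace ((x - r) * (x - r)) with ((r - x) * (r - x)) by ring. apply Rmult_le_compat; lra. }
assert (Hpos : 0 <= RInt (laplace_integrand n) q (r - d)).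
{ apply RInt_ge_0; [lra | apply ex_RInt_laplace_integrand; lra |]. intros x Hx. apply Hfar. lra. }
split; [auto |].
apply Rle_trans with ((r - d - q) * W); [| rewrite Rmult_assoc; fold W; apply Rmult_le_compat_r; lra].
rewrite <- (Rabs_right (RInt _ _ _)) by lra.
apply abs_RInt_le_const; [lra | apply ex_RInt_laplace_integrand; lra |]. intros x Hx.
destruct (Hfar x Hx) as [H0 H1]. rewrite Rabs_right by lra.
assert (gauss (decay / 2) (x - r) <= 1) by (apply gauss_le_1; lra). nra.
Qed.

Lemma RInt_laplace_right_tail n d b : 1 <= n -> 0 < d -> r + d <= b ->
  0 <= RInt (laplace_integrand n) (r + d) b
    <= far_const * exp (- ((n - 1) * decay * (d * d))) * (sqrt PI / 2 / sqrt (decay / 2)).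
Proof.
intros Hn Hd Hb. assert (Hq := q_bounds). assert (Hk := decay_pos).
set (W := far_const * exp (- ((n - 1) * decay * (d * d)))).
assert (HW : 0 < W) by (apply Rmult_lt_0_compat; apply exp_pos).
assert (Hfar : forall x, r + d <= x <= b -> 0 <= laplace_integrand n x <= W * gauss (decay / 2) (x - r))
  by (intros x Hx; apply laplace_integrand_far_le; [lra | lra | apply Rmult_le_compat; lra]).
split.
- apply RInt_ge_0; [lra | apply ex_RInt_laplace_integrand; lra |]. intros x Hx. apply Hfar. lra.
- apply Rle_trans with (RInt (fun x => W * gauss (decay / 2) (x - r)) (r + d) b).
  + apply RInt_le; [lra | apply ex_RInt_laplace_integrand; lra | |].
    * apply (ex_RInt_scal (V := R_NormedModule)), ex_RInt_gauss.
    * intros x Hx. apply Hfar. lra.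
  + rewrite RInt_scalR by apply ex_RInt_gauss. apply Rmult_le_compat_l; [lra |].
    apply Rle_trans with (RInt (fun x => gauss (decay / 2) (x - r)) r b).
    * rewrite <- (RInt_ChaslesR _ r (r + d) b) by apply ex_RInt_gauss.
      assert (0 <= RInt (fun x => gauss (decay / 2) (x - r)) r (r + d)); [| lra].
      apply RInt_ge_0; [lra | apply ex_RInt_gauss | intros; left; apply exp_pos].
    * apply RInt_gauss_le; lra.
Qed.

Lemma RInt_laplace_tails d : 0 < d <= r - q ->
  exists K, forall n b, 1 <= n -> r + d <= b ->
  Rabs (RInt (laplace_integrand n) q b - RInt (laplace_integrand n) (r - d) (r + d)) <= K / (n * sqrt n).
Proof.
intros Hd. assert (Hk := decay_pos). assert (Hq := q_bounds).
set (eps := decay * (d * d)). assert (Heps : 0 < eps) by (unfold eps; apply Rmult_lt_0_compat; nra).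
set (Gk := sqrt PI / 2 / sqrt (decay / 2)).
assert (HGk : 0 <= Gk) by (apply Rdiv_le_0_compat; [assert (H := sqrt_pos PI); lra | apply sqrt_lt_R0; lra]).
assert (HW : 0 < far_const) by apply exp_pos.
exists ((r + Gk) * far_const * (4 * exp eps / (eps * eps))). intros n b Hn Hb.
assert (Hsn : 0 < sqrt n) by (apply sqrt_lt_R0; lra).
assert (HEn : exp (- ((n - 1) * decay * (d * d))) <= 4 * exp eps / (eps * eps) / (n * sqrt n)).
{ replace ((n - 1) * decay * (d * d)) with ((n - 1) * eps) by (unfold eps; ring). now apply exp_decay_le. }
assert (Hl := RInt_laplace_left_tail n d Hn Hd).
assert (Hr := RInt_laplace_right_tail n d b Hn ltac:(lra) Hb). fold Gk in Hr.
set (F := laplace_integrand n) in *.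
rewrite <- (RInt_ChaslesR F q (r - d) b), <- (RInt_ChaslesR F (r - d) (r + d) b)
  by (apply ex_RInt_laplace_integrand; lra).
replace (RInt F q (r - d) + (RInt F (r - d) (r + d) + RInt F (r + d) b) - RInt F (r - d) (r + d))
  with (RInt F q (r - d) + RInt F (r + d) b) by ring.
rewrite Rabs_right by lra.
replace ((r + Gk) * far_const * (4 * exp eps / (eps * eps)) / (n * sqrt n))
  with ((r + Gk) * far_const * (4 * exp eps / (eps * eps) / (n * sqrt n))) by (field; lra).
assert (0 <= (r + Gk) * far_const) by (apply Rmult_le_pos; lra).
assert (Hmon := Rmult_le_compat_l _ _ _ H HEn).
nra.
Qed.

Lemma RInt_laplace_partial : exists b0 K, q <= b0 /\
  forall n b, 1 <= n -> b0 <= b ->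
  Rabs (RInt (laplace_integrand n) q b - Rpower r alpha * sqrt (2 * PI / (n * curv))) <= K / (n * sqrt n).
Proof.
destruct RInt_laplace_center as [d [Kc [Hd [Hdq Hc]]]].
destruct (RInt_laplace_tails d ltac:(lra)) as [Kt Ht].
exists (r + d), (Kc + Kt). split; [lra |]. intros n b Hn Hb.
assert (Hsn : 0 < sqrt n) by (apply sqrt_lt_R0; lra).
replace ((Kc + Kt) / (n * sqrt n)) with (Kt / (n * sqrt n) + Kc / (n * sqrt n)) by (field; lra).
eapply Rle_trans; [| apply Rplus_le_compat; [apply (Ht n b Hn Hb) | apply (Hc n Hn)]].
eapply Rle_trans; [| apply Rabs_triang]. right. f_equal. ring.
Qed.

Lemma Xintegrand_eq n x : 0 < x -> Xintegrand q C alpha n x = exp (n * phase r) * laplace_integrand n x.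
Proof.
intros Hx. unfold Xintegrand, laplace_integrand, phase, Rpower.
rewrite <- !exp_plus. replace (x ^ 2) with (x * x) by ring. f_equal. field. lra.
Qed.

Lemma Xintegrand_continuous n x : 0 < x -> continuous (Xintegrand q C alpha n) x.
Proof.
intros Hx. unfold Xintegrand, Rpower.
apply (ex_derive_continuous (fun x => exp (alpha * ln x) * exp (n * ln (1 + x ^ 2)) * exp (- n * (x - q) ^ 2 / C))).
auto_derive. repeat split; try lra. nra.
Qed.

Lemma X_asymp_laplace (M : R -> R) :
  (forall n, 0 < n -> M n = exp (n * phase r) * (Rpower r alpha * sqrt (2 * PI / (n * curv)))) ->
  X_asymp q C alpha M.
Proof.
intros HM.
destruct RInt_laplace_partial as [b0 [K [Hb0 Hpart]]].
assert (Ha := curv_pos). assert (Hq := q_bounds).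
set (T1 := Rpower r alpha * sqrt (2 * PI / curv)).
assert (HT1 : 0 < T1).
{ apply Rmult_lt_0_compat; [apply exp_pos | apply sqrt_lt_R0, Rdiv_lt_0_compat; [assert (H := PI_RGT_0) |]; lra]. }
exists (K / T1), 1. split; [lra |]. intros n Hn.
assert (Hsn : 0 < sqrt n) by (apply sqrt_lt_R0; lra).
set (Phi := exp (n * phase r)). assert (HPhi : 0 < Phi) by apply exp_pos.
assert (ET : Rpower r alpha * sqrt (2 * PI / (n * curv)) = T1 / sqrt n).
{ unfold T1. replace (2 * PI / (n * curv)) with (2 * PI / curv / n) by (field; lra).
  rewrite sqrt_div_alt by lra. field. lra. }
destruct (RInt_gen_p_infty_close (Xintegrand q C alpha n) q (Phi * (T1 / sqrt n)) (Phi * (K / (n * sqrt n))) b0)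
  as [Hconv Hbound]; auto.
- intros x Hx. apply Xintegrand_continuous. lra.
- intros x Hx. unfold Xintegrand, Rpower. apply Rmult_le_pos; [apply Rmult_le_pos |]; left; apply exp_pos.
- intros b Hb.
  rewrite (RInt_ext _ (fun x => Phi * laplace_integrand n x)), RInt_scalR.
  + rewrite <- Rmult_minus_distr_l, Rabs_mult, Rabs_right, <- ET by lra.
    apply Rmult_le_compat_l; [lra | apply Hpart; lra].
  + apply ex_RInt_laplace_integrand. lra.
  + intros x Hx. rewrite Rmin_left in Hx by lra. apply Xintegrand_eq. lra.
- split; [exact Hconv |].
  exists ((X q C alpha n - Phi * (T1 / sqrt n)) / (Phi * (T1 / sqrt n))).
  assert (HT : 0 < Phi * (T1 / sqrt n)) by (apply Rmult_lt_0_compat; [| apply Rdiv_lt_0_compat]; lra).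
  split.
  + unfold Rdiv at 1. rewrite Rabs_mult, Rabs_inv, (Rabs_right (Phi * _)) by lra.
    apply (Rmult_le_reg_r (Phi * (T1 / sqrt n))); [lra |].
    rewrite Rmult_assoc, Rinv_l, Rmult_1_r by lra.
    eapply Rle_trans; [apply Hbound |]. right. field. lra.
  + rewrite HM by lra. fold Phi. rewrite ET. field. lra.
Qed.

End Laplace.

Lemma sqrt2_pos : 0 < sqrt 2.
Proof. apply sqrt_lt_R0. lra. Qed.

Lemma sqrt2_sqr : sqrt 2 * sqrt 2 = 2.
Proof. apply sqrt_sqrt. lra. Qed.

Lemma inv_sqrt2_sqr : / sqrt 2 * / sqrt 2 = 1 / 2.
Proof. rewrite <- Rinv_mult, sqrt2_sqr. field. Qed.

Lemma Rpower_sqrt2 a : Rpower (sqrt 2) a = Rpower 2 (a / 2).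
Proof.
rewrite <- Rpower_sqrt by lra. rewrite Rpower_mult. f_equal. field.
Qed.

Lemma Rpower_inv_sqrt2 a : Rpower (/ sqrt 2) a = / Rpower 2 (a / 2).
Proof.
rewrite <- Rpower_sqrt2, <- Rpower_Ropp. unfold Rpower. rewrite ln_Rinv by apply sqrt2_pos. f_equal. ring.
Qed.

Lemma exp_mul_ln_sub x b n : 0 < x -> exp (n * (ln x - b)) = Rpower x n / exp (n * b).
Proof.
intros Hx. unfold Rpower, Rdiv. rewrite <- exp_Ropp, <- exp_plus. f_equal. ring.
Qed.

Lemma p_crit : p = / sqrt 2 - c * / sqrt 2 / (1 + / sqrt 2 * / sqrt 2).
Proof.
assert (H := sqrt2_pos). rewrite inv_sqrt2_sqr. unfold p, c. field. lra.
Qed.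

Lemma phase_p_c : phase p c (/ sqrt 2) = ln (3 / 2) - 1 / 6.
Proof.
assert (H := sqrt2_pos). unfold phase. rewrite inv_sqrt2_sqr.
replace ((/ sqrt 2 - p) * (/ sqrt 2 - p)) with (/ (4 * (sqrt 2 * sqrt 2))) by (unfold p; field; lra).
rewrite sqrt2_sqr. replace (1 + 1 / 2) with (3 / 2) by field. unfold c. field.
Qed.

Lemma curv_c : curv c (/ sqrt 2) = 20 / 9.
Proof. unfold curv. rewrite inv_sqrt2_sqr. unfold c. field. Qed.

Lemma twice_p_crit : 2 * p = sqrt 2 - 2 * c * sqrt 2 / (1 + sqrt 2 * sqrt 2).
Proof.
assert (H := sqrt2_pos). rewrite sqrt2_sqr. unfold p, c.
replace (sqrt 2) with (sqrt 2 * sqrt 2 / sqrt 2) at 2 3 by (field; lra).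
rewrite sqrt2_sqr. field. lra.
Qed.

Lemma phase_2p_2c : phase (2 * p) (2 * c) (sqrt 2) = ln 3 - 1 / 3.
Proof.
assert (H := sqrt2_pos). unfold phase. rewrite sqrt2_sqr.
replace ((sqrt 2 - 2 * p) * (sqrt 2 - 2 * p)) with ((sqrt 2 * sqrt 2 - 1) ^ 2 / (sqrt 2 * sqrt 2))
  by (unfold p; field; lra).
rewrite sqrt2_sqr. replace (1 + 2) with 3 by ring. unfold c. field.
Qed.

Lemma curv_2c : curv (2 * c) (sqrt 2) = 14 / 9.
Proof. unfold curv. rewrite sqrt2_sqr. unfold c. field. Qed.

Lemma sqrt_laplace_factor_p_c n : 0 < n ->
  sqrt (2 * PI / (n * (20 / 9))) = 3 * sqrt (PI / 5) / (sqrt 2 * sqrt n).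
Proof.
intros Hn. assert (HP := PI_RGT_0).
rewrite <- sqrt_mult, <- (sqrt_square 3), <- sqrt_mult, <- sqrt_div by nra.
f_equal. field. lra.
Qed.

Lemma sqrt_laplace_factor_2p_2c n : 0 < n ->
  sqrt (2 * PI / (n * (14 / 9))) = 3 * sqrt (PI / 7) / sqrt n.
Proof.
intros Hn. assert (HP := PI_RGT_0).
rewrite <- (sqrt_square 3), <- sqrt_mult, <- sqrt_div by nra.
f_equal. field. lra.
Qed.

Theorem lemma6p4 (alpha : R) :
  X_asymp p c alpha
    (fun n => 3 * sqrt (PI / 5) / Rpower 2 (alpha / 2 + 1 / 2)
              * (Rpower (3 / 2) n / (exp (n / 6) * sqrt n)))
  /\
  X_asymp (2 * p) (2 * c) alpha
    (fun n => 3 * sqrt (PI / 7) * Rpower 2 (alpha / 2)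
              * (Rpower 3 n / (exp (n / 3) * sqrt n))).
Proof.
assert (Hs := sqrt2_pos).
split.
- apply (X_asymp_laplace p c (/ sqrt 2)); [now apply Rinv_0_lt_compat | unfold c; lra
    | rewrite inv_sqrt2_sqr; unfold c; lra | exact p_crit |].
  intros n Hn.
  rewrite phase_p_c, curv_c, sqrt_laplace_factor_p_c, exp_mul_ln_sub, Rpower_inv_sqrt2, Rpower_plus by lra.
  replace (1 / 2) with (/ 2) by field. rewrite Rpower_sqrt by lra.
  replace (n * (1 / 6)) with (n / 6) by field.
  assert (0 < Rpower 2 (alpha / 2)) by apply exp_pos. assert (0 < exp (n / 6)) by apply exp_pos.
  assert (0 < sqrt n) by (apply sqrt_lt_R0; lra).
  field. lra.
- apply (X_asymp_laplace (2 * p) (2 * c) (sqrt 2)); [auto | unfold c; lra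
    | rewrite sqrt2_sqr; unfold c; lra | exact twice_p_crit |].
  intros n Hn.
  rewrite phase_2p_2c, curv_2c, sqrt_laplace_factor_2p_2c, exp_mul_ln_sub, Rpower_sqrt2 by lra.
  replace (n * (1 / 3)) with (n / 3) by field.
  assert (0 < exp (n / 3)) by apply exp_pos. assert (0 < sqrt n) by (apply sqrt_lt_R0; lra).
  field. lra.
Qed.
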